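(* Let $\Gamma$ be an inhomogeneous $Y$-semigroup. Assume that $Y_1 \subseteq \mathcal{D}(A_\Gamma)$ and that $\Gamma$ is $Y_1$-super strongly $s$-continuous and $Y_1$-strongly $t$-continuous. Then \[ \frac{\partial}{\partial s} \Gamma(s,t)f=-A_\Gamma(s) \Gamma(s,t)f \qquad \forall (s,t) \in \Delta_J,\ \forall f \in Y_1 . \]
   Context: Let $(Y,\|\cdot\|)$ be a real separable Banach space and $(Y_1,\|\cdot\|_{Y_1})$ a real separable Banach space continuously embedded in $Y$ (i.e. $Y_1\subseteq Y$ and $\|f\|\le c_1\|f\|_{Y_1}$ for all $f\in Y_1$, for some constant $c_1$). $\mathcal B(Y)$ denotes the bounded linear operators on $Y$. $J$ is either $\mathbb{R}^+$ or $[0,T_\infty]$ for some $T_\infty>0$, and $\Delta_J=\{(s,t)\in J^2: s\le t\}$, $J(s)=\{t\in J: t\ge s\}$. An inhomogeneous $Y$-semigroup is a map $\Gamma:\Delta_J\to\mathcal B(Y)$ with $\Gamma(t,t)=I$ for all $t\in J$ and $\Gamma(s,r)\Gamma(r,t)=\Gamma(s,t)$ whenever $s\le r\le t$ in $J$. Its generator: for $t\in J$, $\mathcal D(A_\Gamma(t))$ is the set of $f\in Y$ such that $\lim_{h\downarrow0,\,t+h\in J}h^{-1}(\Gamma(t,t+h)-I)f$ and $\lim_{h\downarrow 0,\,t-h\in J}h^{-1}(\Gamma(t-h,t)-I)f$ exist in $Y$ and are equal, $A_\Gamma(t)f$ being this common value; $\mathcal D(A_\Gamma)=\bigcap_{t\in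 J}\mathcal D(A_\Gamma(t))$. All limits are in the $Y$-norm unless stated. $\Gamma$ is $Y_1$-strongly $t$-continuous if for every $f\in Y_1$ and $s\in J$ the map $u\mapsto\Gamma(s,u)f$ is continuous from $J(s)$ into $(Y,\|\cdot\|)$. $\Gamma$ is $Y_1$-super strongly $s$-continuous if $\Gamma(s,t)Y_1\subseteq Y_1$ for all $(s,t)\in\Delta_J$ and, for every $f\in Y_1$ and $t\in J$, the map $u\mapsto\Gamma(u,t)f$ is continuous on $\{u\in J:u\le t\}$ for the norm $\|\cdot\|_{Y_1}$. Derivatives at endpoints of the domain are one-sided. *)

From HB Require Import structures.
From mathcomp Require Import all_boot all_order all_algebra.
From mathcomp Require Import all_classical all_reals all_analysis.
Set Implicit Arguments. Unset Strict Implicit. Unset Printing Implicit Defensive.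
Import Order.TTheory GRing.Theory Num.Theory.
Import numFieldNormedType.Exports.
Local Open Scope classical_set_scope.
Local Open Scope ring_scope.

Definition separable {R : realType} (V : normedModType R) : Prop :=
  exists D : set V, countable D /\ closure D = [set: V].

Definition time_interval {R : realType} (J : set R) : Prop :=
  J = `[0, +oo[%classic \/ exists Tinf : R, 0 < Tinf /\ J = `[0, Tinf]%classic.

Definition inhom_semigroup {R : realType} {Y : normedModType R}
  (J : set R) (Gam : R -> R -> {linear Y -> Y}) : Prop :=
  (forall s t, J s -> J t -> s <= t -> continuous (Gam s t)) /\
  (forall t, J t -> forall f, Gam t t f = f) /\
  (forall s r t, J s -> J r -> J t -> s <= r -> r <= t ->
     forall f, Gam s r (Gam r t f) = Gam s t f).

(* One-sided limits, h decreasing to 0, restricted to the admissible h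
   (vacuous when no admissible h exists, i.e. one-sided at endpoints). *)
Definition right_lim_at0 {R : realType} {Y : normedModType R}
  (adm : R -> Prop) (F : R -> Y) (l : Y) : Prop :=
  forall e : R, 0 < e -> exists d : R, 0 < d /\
    forall h : R, 0 < h -> h < d -> adm h -> `|F h - l| < e.

(* g = A_Gamma(t) f, i.e. f \in D(A_Gamma(t)) with A_Gamma(t) f = g:
   both limits h^{-1}(Gamma(t,t+h)-I)f and h^{-1}(Gamma(t-h,t)-I)f
   (h decreasing to 0, t+h resp. t-h in J) exist and equal g. *)
Definition generator_at {R : realType} {Y : normedModType R}
  (J : set R) (Gam : R -> R -> {linear Y -> Y}) (t : R) (f g : Y) : Prop :=
  right_lim_at0 (fun h => J (t + h)) (fun h => h^-1 *: (Gam t (t + h) f - f)) g /\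
  right_lim_at0 (fun h => J (t - h)) (fun h => h^-1 *: (Gam (t - h) t f - f)) g.

Definition deriv_within {R : realType} {Y : normedModType R}
  (D : set R) (F : R -> Y) (s : R) (d : Y) : Prop :=
  right_lim_at0 (fun h => D (s + h)) (fun h => h^-1 *: (F (s + h) - F s)) d /\
  right_lim_at0 (fun h => D (s - h)) (fun h => (- h)^-1 *: (F (s - h) - F s)) d.

From HB Require Import structures.
From mathcomp Require Import all_boot all_order all_algebra.
From mathcomp Require Import all_classical all_reals all_analysis.
Import Order.TTheory GRing.Theory Num.Theory.
Import numFieldNormedType.Exports.

(** Write [Gam u t f = i (G u)] with [G] continuous into [Y1]. The backward
    quotient from the left is, by the evolution law, minus the generator
    quotient at [s] applied to [Gam s t f]. From the right,
    [(Gam (s+h) t f - Gam s t f) / h = - (Gam s (s+h) - I)/h (i (G (s+h)))],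
    an operator family applied to a moving vector; the operators
    [(Gam s (s+h) - I)/h] on [Y1] converge pointwise, so by Banach-Steinhaus
    they are equibounded along every null sequence, and continuity of [G] at
    [s] lets the vector be frozen at [G s]. *)

Set Implicit Arguments. Unset Strict Implicit. Unset Printing Implicit Defensive.

Local Open Scope classical_set_scope.
Local Open Scope ring_scope.

Section right_limits.
Variables (R : realType) (V : normedModType R).
Implicit Types (adm : R -> Prop) (F : R -> V).

Lemma sub_right_lim_at0 adm adm' F l : (forall h, adm' h -> adm h) ->
  right_lim_at0 adm F l -> right_lim_at0 adm' F l.
Proof.
move=> sub_adm Fl e e0; have [d [d0 Hd]] := Fl e e0.
by exists d; split => // h h0 hd /sub_adm; exact: Hd.
Qed.

Lemma eq_right_lim_at0 adm F F' l :
  (forall h, 0 < h -> adm h -> F' h = F h) ->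
  right_lim_at0 adm F l -> right_lim_at0 adm F' l.
Proof.
move=> eqF Fl e e0; have [d [d0 Hd]] := Fl e e0.
by exists d; split => // h h0 hd ah; rewrite eqF //; exact: Hd.
Qed.

Lemma right_lim_at0N adm F l :
  right_lim_at0 adm F l -> right_lim_at0 adm (fun h => - F h) (- l).
Proof.
move=> Fl e e0; have [d [d0 Hd]] := Fl e e0.
by exists d; split => // h h0 hd ah; rewrite -opprD normrN; exact: Hd.
Qed.

End right_limits.

Lemma natSinv_lt_eventually {R : realType} {d : R} : 0 < d ->
  exists N, forall n, (N <= n)%N -> n.+1%:R^-1 < d.
Proof.
by move=> d0; have [N _ HN] := near_infty_natSinv_lt (PosNum d0); exists N.
Qed.

Definition adm_null_seq {R : realType} (adm : R -> Prop) (hs : nat -> R) :=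
  forall n, [/\ 0 < hs n, hs n < n.+1%:R^-1 & adm (hs n)].

Section null_sequences.
Variables (R : realType) (V : normedModType R).
Implicit Types (adm : R -> Prop) (F : R -> V) (hs : nat -> R).

Lemma not_right_lim_at0_seq adm F l : ~ right_lim_at0 adm F l ->
  exists2 e, 0 < e & exists2 hs, adm_null_seq adm hs &
    forall n, e <= `|F (hs n) - l|.
Proof.
move=> /existsNP[e /not_implyP[e0 /forallNP far]]; exists e => //.
have far_n n : exists h, [/\ 0 < h, h < n.+1%:R^-1, adm h & e <= `|F h - l|].
  have /not_andP[|/existsNP[h]] := far n.+1%:R^-1; first by rewrite invr_gt0.
  move=> /not_implyP[h0 /not_implyP[hn /not_implyP[ah /negP]]].
  by rewrite -leNgt => ?; exists h.
have [hs Hhs] := choice far_n; exists hs => n; by case: (Hhs n).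
Qed.

Lemma right_lim_at0_seq_bounded adm F l hs :
  right_lim_at0 adm F l -> adm_null_seq adm hs ->
  exists M, forall n, `|F (hs n)| <= M.
Proof.
move=> Fl null; have [d [d0 Hd]] := Fl 1 ltr01.
have [N HN] := natSinv_lt_eventually d0.
exists (`|l| + 1 + \sum_(k < N) `|F (hs k)|) => n.
have [h0 hn ah] := null n.
have [Nn|nN] := leqP N n; last first.
  rewrite (bigD1 (Ordinal nN)) //= addrCA lerDl.
  by rewrite !addr_ge0 // sumr_ge0.
apply: (@le_trans _ _ (`|l| + 1)); last by rewrite lerDl sumr_ge0.
rewrite -(subrK l (F (hs n))) addrC (le_trans (ler_normD _ _)) // lerD2l.
exact/ltW/Hd/ah/(lt_trans hn (HN n Nn)).
Qed.

End null_sequences.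

Lemma continuous_linear_norm_bound (R : realType) (V W : normedModType R)
  (f : {linear V -> W}) :
  continuous f -> exists M, forall x, `|f x| <= M * `|x|.
Proof.
move=> /linear_bounded_continuous/linear_boundedP[M [_ HM]].
by exists (M + 1); apply: HM; rewrite ltrDl.
Qed.

Lemma linear_equibounded (R : realType) (V : completeNormedModType R)
  (W : normedModType R) (T : nat -> {linear V -> W}) :
  (forall n, exists C, forall x, `|T n x| <= C * `|x|) ->
  (forall x, exists M, forall n, `|T n x| <= M) ->
  exists2 M, 0 < M & forall n x, `|T n x| <= M * `|x|.
Proof.
move=> Tbd Tptw.
pose F := [set (T n : V -> W) | n in [set: nat]].
have [||M HM] := @Banach_Steinhauss _ V W F _ _ 1.
- move=> _ [n _ <-]; split; last exact: linearP.
  have [C HC] := Tbd n; move=> r; exists (`|C| * `|r|) => x xr.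
  apply: (le_trans (HC x)).
  apply: (le_trans (ler_wpM2r (normr_ge0 x) (ler_norm C))).
  by rewrite ler_wpM2l // (le_trans xr (ler_norm r)).
- move=> x; have [M HM] := Tptw x; exists M => _ [n _ <-]; exact: HM.
exists (`|M| + 1); first by rewrite ltr_pwDr.
move=> n x; have [->|x0] := eqVneq x 0; first by rewrite linear0 !normr0 mulr0.
have nx0 : 0 < `|x| by rewrite normr_gt0.
have : `|T n (`|x|^-1 *: x)| <= M.
  apply: HM; first by exists n.
  by rewrite normrZ normfV normr_id mulVf ?gt_eqF.
rewrite linearZ normrZ normfV normr_id ler_pdivrMl // mulrC => /le_trans; apply.
by rewrite ler_wpM2r // (le_trans (ler_norm M)) // lerDl.
Qed.

Lemma right_lim_at0_linear_apply (R : realType) (V : completeNormedModType R)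
  (W : normedModType R) (adm : R -> Prop) (T : R -> {linear V -> W})
  (x : R -> V) (x0 : V) (g : W) :
  (forall h, 0 < h -> adm h -> exists C, forall y, `|T h y| <= C * `|y|) ->
  (forall y, exists gy, right_lim_at0 adm (fun h => T h y) gy) ->
  right_lim_at0 adm (fun h => T h x0) g -> right_lim_at0 adm x x0 ->
  right_lim_at0 adm (fun h => T h (x h)) g.
Proof.
(* Pointwise convergence only bounds [T h y] for small [h], so the uniform
   boundedness principle is applied to [T] along a null sequence. *)
move=> Tbd Tptw Tx0 xx0; apply: contrapT.
move=> /not_right_lim_at0_seq[e e0 [hs null far]].
have [M M0 HM] : exists2 M, 0 < M & forall n y, `|T (hs n) y| <= M * `|y|.
  apply: (linear_equibounded (T := T \o hs)) => [n|y].
    by have [h0 _ ah] := null n; exact: Tbd.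
  by have [gy Hy] := Tptw y; exact: right_lim_at0_seq_bounded Hy null.
have e20 : 0 < e / 2 by rewrite divr_gt0.
have [d1 [d10 Hd1]] := Tx0 _ e20.
have [d2 [d20 Hd2]] := xx0 _ (divr_gt0 e20 M0).
have d0 : 0 < Num.min d1 d2 by rewrite lt_min d10 d20.
have [N HN] := natSinv_lt_eventually d0.
have [h0 hN ah] := null N.
have /(lt_trans hN) := HN N (leqnn N); rewrite lt_min => /andP[hd1 hd2].
have := far N; rewrite leNgt => /negP; apply.
have -> : T (hs N) (x (hs N)) - g =
    T (hs N) (x (hs N) - x0) + (T (hs N) x0 - g).
  by rewrite linearB addrA subrK.
rewrite [e]splitr; apply: le_lt_trans (ler_normD _ _) _.
apply: ltrD; last exact: Hd1.
by apply: le_lt_trans (HM _ _) _; rewrite -ltr_pdivlMl // mulrC; exact: Hd2.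
Qed.

Lemma within_continuous_right_lim_at0 (R : realType) (V : normedModType R)
  (A : set R) (G : R -> V) s : {within A, continuous G} -> A s ->
  right_lim_at0 (fun h => A (s + h)) (fun h => G (s + h)) (G s).
Proof.
move=> /subspace_continuousP /(_ s) cG As e e0.
have /cvgrPdist_lt/(_ e e0)/nbhs_ballP[d d0 Hd] := cG As.
exists d; split => // h h0 hd Ash; rewrite distrC; apply: Hd => //.
by rewrite -ball_normE /ball_ /= opprD addrA subrr add0r normrN gtr0_norm.
Qed.

Section difference_quotient.
Variables (R : realType) (U V : normedModType R).
Variables (P : {linear V -> V}) (i : {linear U -> V}) (h : R).

Definition diff_quot (y : U) : V := h^-1 *: (P (i y) - i y).

Lemma diff_quot_linear : linear diff_quot.
Proof.
move=> a y z; rewrite /diff_quot !linearP scalerA mulrC -scalerA -scalerDr.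
by rewrite scalerBr /= scalerN addrACA.
Qed.

HB.instance Definition _ :=
  GRing.isLinear.Build R U V *:%R diff_quot diff_quot_linear.

Lemma diff_quot_bounded (c1 : R) : continuous P ->
  (forall y, `|i y| <= c1 * `|y|) ->
  exists C, forall y, `|diff_quot y| <= C * `|y|.
Proof.
move=> /continuous_linear_norm_bound[M HM] i_bound.
have HP x : `|P x| <= `|M| * `|x|.
  exact: le_trans (HM x) (ler_wpM2r (normr_ge0 _) (ler_norm M)).
exists (`|h^-1| * ((`|M| + 1) * c1)) => y.
rewrite /diff_quot normrZ -mulrA ler_wpM2l //.
apply: le_trans (ler_normB _ _) _.
apply: (@le_trans _ _ ((`|M| + 1) * `|i y|)).
  by rewrite mulrDl mul1r lerD2r.
by rewrite -mulrA ler_wpM2l // addr_ge0.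
Qed.

End difference_quotient.

Section backward_derivative.
Variables (R : realType) (Y : normedModType R) (J : set R).
Variable Gam : R -> R -> {linear Y -> Y}.
Hypothesis Gam_comp : forall s r t, J s -> J r -> J t -> s <= r -> r <= t ->
  forall f, Gam s r (Gam r t f) = Gam s t f.

Lemma backward_left_deriv s t f g : J s -> J t -> s <= t ->
  right_lim_at0 (fun h => J (s - h))
    (fun h => h^-1 *: (Gam (s - h) s (Gam s t f) - Gam s t f)) g ->
  right_lim_at0 (fun h => J (s - h) /\ s - h <= t)
    (fun h => (- h)^-1 *: (Gam (s - h) t f - Gam s t f)) (- g).
Proof.
move=> Js Jt st gen.
apply: (eq_right_lim_at0 _ (sub_right_lim_at0 _ (right_lim_at0N gen))).
  move=> h h0 [Jsh _].
  have sh_s : s - h <= s by rewrite lerBlDr lerDl ltW.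
  by rewrite Gam_comp // invrN scaleNr.
by move=> h [].
Qed.

Variables (Y1 : completeNormedModType R) (i : {linear Y1 -> Y}) (c1 : R).
Hypothesis i_bound : forall y, `|i y| <= c1 * `|y|.
Hypothesis Gam_cont : forall s t, J s -> J t -> s <= t -> continuous (Gam s t).
Hypothesis Y1_sub_dom : forall (y : Y1) s, J s ->
  exists g, generator_at J Gam s (i y) g.

Lemma backward_right_deriv s t f (G : R -> Y1) g : J s -> J t -> s <= t ->
  (forall u, J u -> u <= t -> i (G u) = Gam u t f) ->
  {within [set u | J u /\ u <= t], continuous G} ->
  right_lim_at0 (fun h => J (s + h))
    (fun h => h^-1 *: (Gam s (s + h) (Gam s t f) - Gam s t f)) g ->
  right_lim_at0 (fun h => J (s + h) /\ s + h <= t)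
    (fun h => h^-1 *: (Gam (s + h) t f - Gam s t f)) (- g).
Proof.
move=> Js Jt st iG cG gen.
pose adm h := J (s + h) /\ s + h <= t.
have adm_J h : adm h -> J (s + h) by case.
have sh_s h : 0 < h -> s <= s + h by move=> h0; rewrite lerDl ltW.
have lim : right_lim_at0 adm
    (fun h => diff_quot (Gam s (s + h)) i h (G (s + h))) g.
  apply: (right_lim_at0_linear_apply (x0 := G s)).
  - move=> h h0 [Jsh _]; apply: (diff_quot_bounded _ _ i_bound).
    exact: Gam_cont (sh_s h h0).
  - move=> y; have [gy [gyr _]] := Y1_sub_dom y Js.
    by exists gy; exact: sub_right_lim_at0 adm_J gyr.
  - by rewrite /= /diff_quot iG //; exact: sub_right_lim_at0 adm_J gen.
  - exact: within_continuous_right_lim_at0 cG (conj Js st).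
apply: eq_right_lim_at0 (right_lim_at0N lim) => h h0 [Jsh sht].
by rewrite /diff_quot iG // Gam_comp // ?sh_s // -scalerN opprB.
Qed.

End backward_derivative.

Theorem theorem2p6 (R : realType)
  (Y : completeNormedModType R) (Y1 : completeNormedModType R)
  (i : {linear Y1 -> Y})
  (J : set R) (Gam : R -> R -> {linear Y -> Y}) :
  separable Y -> separable Y1 ->
  injective i -> (exists c1 : R, forall f : Y1, `|i f| <= c1 * `|f|) ->
  time_interval J ->
  inhom_semigroup J Gam ->
  (* Y1 is contained in D(A_Gamma) *)
  (forall (f : Y1) (t : R), J t -> exists g : Y, generator_at J Gam t (i f) g) ->
  (* Y1-super strongly s-continuous *)
  (forall s t, J s -> J t -> s <= t ->
     forall f : Y1, exists g : Y1, Gam s t (i f) = i g) ->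
  (forall (f : Y1) (t : R), J t ->
     exists G : R -> Y1,
       (forall u, J u -> u <= t -> i (G u) = Gam u t (i f)) /\
       {within [set u | J u /\ u <= t], continuous G}) ->
  (* Y1-strongly t-continuous *)
  (forall (f : Y1) (s : R), J s ->
     {within [set u | J u /\ s <= u], continuous (fun u => Gam s u (i f))}) ->
  forall s t, J s -> J t -> s <= t -> forall f : Y1,
    exists g : Y,
      generator_at J Gam s (Gam s t (i f)) g /\
      deriv_within [set u | J u /\ u <= t] (fun u => Gam u t (i f)) s (- g).
Proof.
move=> _ _ _ [c1 i_bound] _ [Gam_cont [_ Gam_comp]] Y1_sub_dom _ Y1_lift _.
move=> s t Js Jt st f.
have [G [iG cG]] := Y1_lift f t Jt.
have [g gen] := Y1_sub_dom (G s) s Js.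
rewrite iG // in gen; exists g; split => //; split.
- exact: (backward_right_deriv Gam_comp i_bound Gam_cont Y1_sub_dom
           Js Jt st iG cG gen.1).
- exact: (backward_left_deriv Gam_comp Js Jt st gen.2).
Qed.
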